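(* Assume the standing hypotheses (H). For each $(t,\mathbf x)\in\mathbf D$, $$\widetilde g(t,\mathbf x)=-\Sigma\big(\phi^\star S^2\mathcal C_{SS}-(\beta\mathcal V_A+S^2\Gamma)\big)\widetilde\sigma-\Sigma\Big(\phi^\star S\mathcal C_{S\Sigma}-S\frac{\partial\Delta}{\partial\Sigma}\Big)\widetilde\eta-\frac12\big(\phi^\star\mathcal C_{\Sigma\Sigma}-\mathcal V_{\Sigma\Sigma}\big)\widetilde\xi,$$ where $(\widetilde\nu,\widetilde\sigma,\widetilde\eta,\widetilde\xi)=\widetilde{\boldsymbol\zeta}$, $\phi^\star=\mathcal V_\Sigma/\mathcal C_\Sigma$, and all functions are evaluated at $(t,\mathbf x)$.
   Context: Setting. Fix $T>0$, $S_0>0$, $\Sigma_0>0$, $A_0\in\mathbb R$. $\Omega$: continuous paths $\omega=(\omega^S,\omega^\Sigma,\omega^A):[0,T]\to\mathbb R^3$ with $\omega_0=(S_0,\Sigma_0,A_0)$ (uniform topology, Borel $\sigma$-algebra $\mathcal F$); $S,\Sigma,A$ coordinate processes, $\mathbb F$ their raw filtration, $M_t=\sup_{u\le t}S_u$, $\mathbf X_t=(S_t,A_t,M_t,\Sigma_t)$. $\mathbf G=\mathbb R_+\times\mathbb R\times\mathbb R_+$, $\mathbf D^0=(0,T)\times\mathbf G\times\mathbb R_+$ (points $(t,\mathbf x)$, $\mathbf x=(S,A,M,\Sigma)$); $0<\underline\Sigma<\Sigma_0<\overline\Sigma$, $\mathbf D=(0,T)\times\mathbf G\times[\underline\Sigma,\overline\Sigma]$.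 $\|\cdot\|$ Euclidean norm, $\mathbf e_4$ fourth unit vector, $x^-=\max(-x,0)$. Call: $\mathcal C(t,S,\Sigma)$ with $\mathcal C_t+\frac12\Sigma^2S^2\mathcal C_{SS}=0$, $\mathcal C(T_{\mathsf C},S,\Sigma)=\mathsf C(S)$. $b^{\mathcal C}(t,\mathbf x;\boldsymbol\zeta)=\nu\mathcal C_\Sigma+\frac12S^2\mathcal C_{SS}(\sigma^2-\Sigma^2)+\sigma\eta S\mathcal C_{S\Sigma}+\frac12(\eta^2+\xi)\mathcal C_{\Sigma\Sigma}$ for $\boldsymbol\zeta=(\nu,\sigma,\eta,\xi)$. Models: $\mathfrak P^{00}$ = probability measures $P$ on $(\Omega,\mathcal F)$ with progressively measurable $\boldsymbol\zeta^P=(\nu^P,\sigma^P,\eta^P,\xi^P)$ such that $S$, $\Sigma-\int_0^\cdot\nu^P_tdt$ are continuous local $P$-martingales with $d\langle S\rangle_t=S_t^2(\sigma^P_t)^2dt$, $d\langle\Sigma\rangle_t=((\eta^P_t)^2+\xi^P_t)dt$, $d\langle S,\Sigma\rangle_t=S_t\sigma^P_t\eta^P_tdt$, $S,\Sigma>0$, $\xi^P\ge0$, $b^{\mathcal C}(t,\mathbf X_t;\boldsymbol\zeta^P_t)=0$ $dt\times P$-a.e.; for Borel $\alpha,\beta,\gamma,\delta:[0,T]\times\mathbb R^3\to\mathbb R$, $\mathfrak P^0$ = those $P$ with $dA_t=(\alpha+\frac12(\sigma^P_t)^2\beta)dt+\gamma dS_t+\delta dM_t$. $\boldsymbol\zeta^0(\Sigma)=(0,\Sigma,0,0)^\top$;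 reference model: $\boldsymbol\zeta^P_t=\boldsymbol\zeta^0(\Sigma_t)$ a.e. Non-traded option: $\mathcal V(\cdot,\Sigma)$ solves $\mathcal V_t+(\alpha+\frac12\beta\Sigma^2)\mathcal V_A+\frac12\Sigma^2S^2(\mathcal V_{SS}+2\gamma\mathcal V_{SA}+\gamma^2\mathcal V_{AA})=0$ on $(0,T)\times\mathbf G$, $\delta\mathcal V_A+\mathcal V_M=0$ on $\{S\ge M\}$, $\mathcal V(T,\cdot,\Sigma)=\mathsf V$. $\Delta=\mathcal V_S+\gamma\mathcal V_A$, $\Gamma=\mathcal V_{SS}+2\gamma\mathcal V_{SA}+\gamma^2\mathcal V_{AA}$, $\frac{\partial\Delta}{\partial\Sigma}:=\mathcal V_{S\Sigma}+\gamma\mathcal V_{A\Sigma}$. P&L: $V_t=\mathcal V(t,\mathbf X_t)$, $C_t=\mathcal C(t,S_t,\Sigma_t)$; strategies $\boldsymbol\upsilon=(\theta,\phi)$ real locally bounded progressive; $Y^{\boldsymbol\upsilon,P}_t=Y_0+V_0+\int_0^t\theta dS+\int_0^t\phi dC-V_t$. Preferences: $\Psi=\mathrm{diag}(\psi_\nu,\psi_\sigma,\psi_\eta,\psi_\xi)$, positive; a utility $U$, strategy set $\mathfrak Y$, model set $\mathfrak P\subset\mathfrak P^0$. Candidate control: $\mathbf c=(\mathcal C_\Sigma,\Sigma S^2\mathcal C_{SS},\Sigma S\mathcal C_{S\Sigma},\frac12\mathcal C_{\Sigma\Sigma})^\top$, $\mathbf v=(\mathcal V_\Sigma,\Sigma(\beta\mathcal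 V_A+S^2\Gamma),\Sigma S\frac{\partial\Delta}{\partial\Sigma},\frac12\mathcal V_{\Sigma\Sigma})^\top$; $\lambda=\frac{\mathbf c^\top\Psi\mathbf v}{\mathbf c^\top\Psi\mathbf c}$ if $\mathcal V_{\Sigma\Sigma}-\frac{\mathbf c^\top\Psi\mathbf v}{\mathbf c^\top\Psi\mathbf c}\mathcal C_{\Sigma\Sigma}\ge0$, else $\lambda=\frac{\mathbf c^\top\Psi\mathbf v-\frac14\mathcal C_{\Sigma\Sigma}\mathcal V_{\Sigma\Sigma}\psi_\xi}{\mathbf c^\top\Psi\mathbf c-\frac14\mathcal C_{\Sigma\Sigma}^2\psi_\xi}$; $\mu=\frac12(\mathcal V_{\Sigma\Sigma}-\lambda\mathcal C_{\Sigma\Sigma})^-$; $\widetilde{\boldsymbol\zeta}=\Psi(\mathbf v-\lambda\mathbf c+\mu\mathbf e_4)$; $\boldsymbol\zeta^\psi=\boldsymbol\zeta^0(\Sigma)+\widetilde{\boldsymbol\zeta}\mathbf 1_{\{\underline\Sigma<\Sigma<\overline\Sigma\}}\psi$; $\widetilde g=\mathbf v^\top\widetilde{\boldsymbol\zeta}$. Cash-equivalent PDE: for $\Sigma\in[\underline\Sigma,\overline\Sigma]$, $\widetilde w_t+(\alpha+\frac12\beta\Sigma^2)\widetilde w_A+\frac12\Sigma^2S^2(\widetilde w_{SS}+2\gamma\widetilde w_{SA}+\gamma^2\widetilde w_{AA})+\frac12\widetilde g(\cdot,\Sigma)=0$ on $(0,T)\times\mathbf G$, $\delta\widetilde w_A+\widetilde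 w_M=0$ on $\{S\ge M\}$, $\widetilde w(T,\cdot,\Sigma)=0$. $L^p_{\mathfrak P}$: Borel $K$ on $\mathbf D^0$ with $\sup_{P\in\mathfrak P}E^P[\int_0^T|K(t,\mathbf X_t)|^pdt]^{1/p}<\infty$. Candidate asymptotic model family: $(P^\psi)_{\psi\in(0,\psi_0)}\subset\mathfrak P$, $\psi_0\in(0,1)$, with $K_0\in L^4_{\mathfrak P}$ and $\|\boldsymbol\zeta^{P^\psi}_t-\boldsymbol\zeta^\psi(t,\mathbf X_t)\|\le K_0(t,\mathbf X_t)\psi^2$ $dt\times P^\psi$-a.e. Assumption (A): (a) $\exists K_{\mathfrak Y}$: $Y^{\boldsymbol\upsilon,P}>-K_{\mathfrak Y}$ $dt\times P$-a.e. for all $\boldsymbol\upsilon\in\mathfrak Y$, $P\in\mathfrak P$; (b) $\mathfrak P$ contains a candidate asymptotic model family and a reference model, and constants $\underline\nu<0<\overline\nu$, $0<\underline\sigma<\underline\Sigma$, $\overline\Sigma<\overline\sigma$, $\underline\eta<0<\overline\eta$, $\overline\xi>0$ bound $\nu^P,\sigma^P,\eta^P,\xi^P,\Sigma$ in $[\underline\nu,\overline\nu],[\underline\sigma,\overline\sigma],[\underline\eta,\overline\eta],[0,\overline\xi],[\underline\Sigma,\overline\Sigma]$ $dt\times P$-a.e. for all $P\in\mathfrak P$; (c) $T_{\mathsf C}\ge T$, $\mathcal C\in C^{1,2,2}((0,T_{\mathsf C})\times\mathbb R_+^2)\cap C([0,T_{\mathsf C}]\times\overline{\mathbb R}_+^2)$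 solves the call PDE classically for $\Sigma\in[\underline\Sigma,\overline\Sigma]$, $\mathcal C_\Sigma\ne0$ and $|\mathcal C_{\Sigma\Sigma}|\le K_{\mathcal C}(|\mathcal C_\Sigma|+|S^2\mathcal C_{SS}|+|S\mathcal C_{S\Sigma}|)$ on $(0,T)\times\mathbb R_+\times[\underline\Sigma,\overline\Sigma]$ with $K_{\mathcal C}\in L^2_{\mathfrak P}$; (d) $\mathcal V\in C^{1,2,2,1,2}(\mathbf D^0)\cap C(\overline{\mathbf D^0})$ solves the $\mathcal V$-PDE classically for $\Sigma\in[\underline\Sigma,\overline\Sigma]$, $|\mathcal V_\Sigma|,|\beta\mathcal V_A+S^2\Gamma|,|S\frac{\partial\Delta}{\partial\Sigma}|,|\mathcal V_{\Sigma\Sigma}|\le K_{\mathcal V}$ on $\mathbf D$; (e) $\widetilde w\in C^{1,2,2,1,2}(\mathbf D^0)\cap C(\overline{\mathbf D^0})$ solves the cash-equivalent PDE classically for $\Sigma\in[\underline\Sigma,\overline\Sigma]$, $0\le\widetilde w\le K_{\widetilde w}$ on $\mathbf D$, and $\widetilde w_\Sigma,S(\widetilde w_S+\gamma\widetilde w_A),\beta\widetilde w_A+S^2(\widetilde w_{SS}+2\gamma\widetilde w_{SA}+\gamma^2\widetilde w_{AA}),S(\widetilde w_{S\Sigma}+\gamma\widetilde w_{A\Sigma}),\widetilde w_{\Sigma\Sigma}\in L^4_{\mathfrak P}$; (f) $U\in C^3(\mathbb R)$, $U'>0$, $U''<0$, $-U''/U'$ nonincreasing. Delta-vega hedge $\boldsymbol\upsilon^\star_t=(\Delta-\frac{\mathcal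 V_\Sigma}{\mathcal C_\Sigma}\mathcal C_S,\frac{\mathcal V_\Sigma}{\mathcal C_\Sigma})(t,\mathbf X_t)$. Standing hypotheses (H): Assumption (A) holds, $\boldsymbol\upsilon^\star\in\mathfrak Y$, and $(P^\psi)_{\psi\in(0,\psi_0)}\subset\mathfrak P$ is a candidate asymptotic model family. *)

From Stdlib Require Import Reals.
From Coquelicot Require Import Coquelicot.
Open Scope R_scope.

(* C(t,S,Sigma) *)
Definition Fun3 := R -> R -> R -> R.
(* V(t,S,A,M,Sigma) *)
Definition Fun5 := R -> R -> R -> R -> R -> R.
(* alpha, beta, gamma, delta : (t,S,A,M) -> R *)
Definition Coef := R -> R -> R -> R -> R.

Definition dC_t (C : Fun3) t S Sg := Derive (fun u => C u S Sg) t.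
Definition dC_S (C : Fun3) t S Sg := Derive (fun y => C t y Sg) S.
Definition dC_Sg (C : Fun3) t S Sg := Derive (fun s => C t S s) Sg.
Definition dC_SS (C : Fun3) t S Sg := Derive (fun y => dC_S C t y Sg) S.
Definition dC_SgSg (C : Fun3) t S Sg := Derive (fun s => dC_Sg C t S s) Sg.
Definition dC_SSg (C : Fun3) t S Sg := Derive (fun s => dC_S C t S s) Sg.

Definition dV_t (V : Fun5) t S A M Sg := Derive (fun u => V u S A M Sg) t.
Definition dV_S (V : Fun5) t S A M Sg := Derive (fun y => V t y A M Sg) S.
Definition dV_A (V : Fun5) t S A M Sg := Derive (fun a => V t S a M Sg) A.
Definition dV_M (V : Fun5) t S A M Sg := Derive (fun m => V t S A m Sg) M.
Definition dV_Sg (V : Fun5) t S A M Sg := Derive (fun s => V t S A M s) Sg.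
Definition dV_SS (V : Fun5) t S A M Sg := Derive (fun y => dV_S V t y A M Sg) S.
Definition dV_SA (V : Fun5) t S A M Sg := Derive (fun a => dV_S V t S a M Sg) A.
Definition dV_AA (V : Fun5) t S A M Sg := Derive (fun a => dV_A V t S a M Sg) A.
Definition dV_SgSg (V : Fun5) t S A M Sg := Derive (fun s => dV_Sg V t S A M s) Sg.
Definition dV_SSg (V : Fun5) t S A M Sg := Derive (fun s => dV_S V t S A M s) Sg.
Definition dV_ASg (V : Fun5) t S A M Sg := Derive (fun s => dV_A V t S A M s) Sg.

Definition Gam (V : Fun5) (gam : Coef) t S A M Sg :=
  dV_SS V t S A M Sg + 2 * gam t S A M * dV_SA V t S A M Sg
  + (gam t S A M) ^ 2 * dV_AA V t S A M Sg.
Definition dDelta_dSg (V : Fun5) (gam : Coef) t S A M Sg :=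
  dV_SSg V t S A M Sg + gam t S A M * dV_ASg V t S A M Sg.

Record vec4 := mk4 { e1 : R; e2 : R; e3 : R; e4 : R }.

Definition dot4 (a b : vec4) :=
  e1 a * e1 b + e2 a * e2 b + e3 a * e3 b + e4 a * e4 b.
(* psi = (psi_nu, psi_sigma, psi_eta, psi_xi), the diagonal of Psi;
   dotPsi psi a b = a^T Psi b *)
Definition dotPsi (psi a b : vec4) :=
  e1 psi * e1 a * e1 b + e2 psi * e2 a * e2 b
  + e3 psi * e3 a * e3 b + e4 psi * e4 a * e4 b.
Definition negpart (x : R) := Rmax (- x) 0.

Definition cvec (C : Fun3) t S Sg : vec4 :=
  mk4 (dC_Sg C t S Sg) (Sg * S ^ 2 * dC_SS C t S Sg)
      (Sg * S * dC_SSg C t S Sg) (/ 2 * dC_SgSg C t S Sg).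
Definition vvec (V : Fun5) (beta gam : Coef) t S A M Sg : vec4 :=
  mk4 (dV_Sg V t S A M Sg)
      (Sg * (beta t S A M * dV_A V t S A M Sg + S ^ 2 * Gam V gam t S A M Sg))
      (Sg * S * dDelta_dSg V gam t S A M Sg)
      (/ 2 * dV_SgSg V t S A M Sg).

Definition lam (psi c v : vec4) (CSgSg VSgSg : R) : R :=
  if Rle_dec 0 (VSgSg - dotPsi psi c v / dotPsi psi c c * CSgSg)
  then dotPsi psi c v / dotPsi psi c c
  else (dotPsi psi c v - / 4 * CSgSg * VSgSg * e4 psi)
       / (dotPsi psi c c - / 4 * CSgSg ^ 2 * e4 psi).

Definition mu (psi c v : vec4) (CSgSg VSgSg : R) : R :=
  / 2 * negpart (VSgSg - lam psi c v CSgSg VSgSg * CSgSg).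

Definition zeta_tilde_gen (psi c v : vec4) (CSgSg VSgSg : R) : vec4 :=
  let l := lam psi c v CSgSg VSgSg in
  let m := mu psi c v CSgSg VSgSg in
  mk4 (e1 psi * (e1 v - l * e1 c)) (e2 psi * (e2 v - l * e2 c))
      (e3 psi * (e3 v - l * e3 c)) (e4 psi * (e4 v - l * e4 c + m)).

Definition zeta_tilde (C : Fun3) (V : Fun5) (beta gam : Coef) (psi : vec4)
  t S A M Sg : vec4 :=
  zeta_tilde_gen psi (cvec C t S Sg) (vvec V beta gam t S A M Sg)
    (dC_SgSg C t S Sg) (dV_SgSg V t S A M Sg).

Definition g_tilde (C : Fun3) (V : Fun5) (beta gam : Coef) (psi : vec4)
  t S A M Sg : R :=
  dot4 (vvec V beta gam t S A M Sg) (zeta_tilde C V beta gam psi t S A M Sg).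

Definition phi_star (C : Fun3) (V : Fun5) t S A M Sg : R :=
  dV_Sg V t S A M Sg / dC_Sg C t S Sg.

From Stdlib Require Import Reals Lra.
From Coquelicot Require Import Coquelicot.
Open Scope R_scope.

(* The control zeta_tilde is orthogonal to the call's vector c.  If the
   constraint xi >= 0 is slack, lambda is the Psi-projection coefficient of v
   on c and mu = 0.  If it binds, the residual V_{Sigma Sigma} - lambda
   C_{Sigma Sigma} is a positive multiple of the slack residual, hence
   negative, and mu exactly compensates the correction made to lambda.  So
   g_tilde = v . zeta_tilde = (v - phi_star c) . zeta_tilde, whose first
   component vanishes because phi_star = V_Sigma / C_Sigma. *)

Lemma negpart_eq0 (x : R) : 0 <= x -> negpart x = 0.
Proof. intros Hx; unfold negpart; rewrite Rmax_right; lra. Qed.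

Lemma negpart_neg (x : R) : x < 0 -> negpart x = - x.
Proof. intros Hx; unfold negpart; rewrite Rmax_left; lra. Qed.

Lemma dot4_zeta_tilde_genE (psi c v : vec4) (CSS VSS : R) :
  dot4 c (zeta_tilde_gen psi c v CSS VSS) =
    dotPsi psi c v - lam psi c v CSS VSS * dotPsi psi c c
    + mu psi c v CSS VSS * e4 psi * e4 c.
Proof. unfold dot4, dotPsi, zeta_tilde_gen; simpl; ring. Qed.

Lemma constrained_residual (N D p CSS VSS : R) :
  D <> 0 -> D - / 4 * CSS ^ 2 * p <> 0 ->
  VSS - (N - / 4 * CSS * VSS * p) / (D - / 4 * CSS ^ 2 * p) * CSS =
    D / (D - / 4 * CSS ^ 2 * p) * (VSS - N / D * CSS).
Proof. intros HD HD0; field; split; [exact HD | intro H; apply HD0; lra]. Qed.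

Section Orthogonality.

Variables (psi c v : vec4) (CSS VSS : R).
Hypotheses (psi1 : 0 < e1 psi) (psi2 : 0 < e2 psi) (psi3 : 0 < e3 psi)
  (psi4 : 0 < e4 psi).
Hypothesis c1_neq0 : e1 c <> 0.
Hypothesis c4E : e4 c = / 2 * CSS.

Lemma dotPsi_constrained_pos : 0 < dotPsi psi c c - / 4 * CSS ^ 2 * e4 psi.
Proof.
  assert (Hc1 : 0 < e1 c * e1 c) by (apply Rsqr_pos_lt; exact c1_neq0).
  unfold dotPsi; rewrite c4E; nra.
Qed.

Lemma dotPsi_pos : 0 < dotPsi psi c c.
Proof.
  pose proof dotPsi_constrained_pos.
  assert (0 <= / 4 * CSS ^ 2 * e4 psi) by nra.
  lra.
Qed.

Lemma lam_slack :
  0 <= VSS - dotPsi psi c v / dotPsi psi c c * CSS ->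
  lam psi c v CSS VSS = dotPsi psi c v / dotPsi psi c c.
Proof. intros H; unfold lam; destruct Rle_dec; tauto. Qed.

Lemma lam_binding :
  ~ 0 <= VSS - dotPsi psi c v / dotPsi psi c c * CSS ->
  lam psi c v CSS VSS =
    (dotPsi psi c v - / 4 * CSS * VSS * e4 psi)
    / (dotPsi psi c c - / 4 * CSS ^ 2 * e4 psi).
Proof. intros H; unfold lam; destruct Rle_dec; tauto. Qed.

Lemma zeta_tilde_gen_orthogonal : dot4 c (zeta_tilde_gen psi c v CSS VSS) = 0.
Proof.
  pose proof dotPsi_pos as HD.
  pose proof dotPsi_constrained_pos as HD0.
  rewrite dot4_zeta_tilde_genE; unfold mu.
  destruct (Rle_dec 0 (VSS - dotPsi psi c v / dotPsi psi c c * CSS))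
    as [Hslack | Hbind].
  - rewrite (lam_slack Hslack), negpart_eq0 by exact Hslack.
    field; lra.
  - assert (Hres : VSS - lam psi c v CSS VSS * CSS < 0).
    { rewrite (lam_binding Hbind), constrained_residual by lra.
      apply Rmult_pos_neg; [apply Rdiv_lt_0_compat |]; lra. }
    rewrite negpart_neg by exact Hres.
    rewrite (lam_binding Hbind), c4E; field; lra.
Qed.

End Orthogonality.

Theorem corollary5p7
  (T TC S0 Sig0 Slo Shi : R) (alpha beta gam delta : Coef)
  (C : Fun3) (Cpay : R -> R) (V : Fun5) (Vpay : R -> R -> R -> R)
  (psi : vec4) :
  0 < T -> 0 < S0 -> 0 < Slo -> Slo < Sig0 -> Sig0 < Shi ->
  0 < e1 psi -> 0 < e2 psi -> 0 < e3 psi -> 0 < e4 psi ->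
  (* (A)(c): the call *)
  T <= TC ->
  (forall t S Sg, 0 < t < TC -> 0 < S -> Slo <= Sg <= Shi ->
     dC_t C t S Sg + / 2 * Sg ^ 2 * S ^ 2 * dC_SS C t S Sg = 0) ->
  (forall S Sg, 0 < S -> Slo <= Sg <= Shi -> C TC S Sg = Cpay S) ->
  (forall t S Sg, 0 < t < T -> 0 < S -> Slo <= Sg <= Shi ->
     dC_Sg C t S Sg <> 0) ->
  (* (A)(d): the non-traded option *)
  (forall t S A M Sg, 0 < t < T -> 0 < S -> 0 < M -> Slo <= Sg <= Shi ->
     dV_t V t S A M Sg
     + (alpha t S A M + / 2 * beta t S A M * Sg ^ 2) * dV_A V t S A M Sg
     + / 2 * Sg ^ 2 * S ^ 2 * Gam V gam t S A M Sg = 0) ->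
  (forall t S A M Sg, 0 < t < T -> 0 < S -> 0 < M -> S >= M ->
     Slo <= Sg <= Shi ->
     delta t S A M * dV_A V t S A M Sg + dV_M V t S A M Sg = 0) ->
  (forall S A M Sg, 0 < S -> 0 < M -> Slo <= Sg <= Shi ->
     V T S A M Sg = Vpay S A M) ->
  (exists KV : R, forall t S A M Sg,
     0 < t < T -> 0 < S -> 0 < M -> Slo <= Sg <= Shi ->
     Rabs (dV_Sg V t S A M Sg) <= KV /\
     Rabs (beta t S A M * dV_A V t S A M Sg + S ^ 2 * Gam V gam t S A M Sg) <= KV /\
     Rabs (S * dDelta_dSg V gam t S A M Sg) <= KV /\
     Rabs (dV_SgSg V t S A M Sg) <= KV) ->
  forall t S A M Sg, 0 < t < T -> 0 < S -> 0 < M -> Slo <= Sg <= Shi ->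
  let zt := zeta_tilde C V beta gam psi t S A M Sg in
  let ph := phi_star C V t S A M Sg in
  g_tilde C V beta gam psi t S A M Sg =
    - Sg * (ph * S ^ 2 * dC_SS C t S Sg
            - (beta t S A M * dV_A V t S A M Sg + S ^ 2 * Gam V gam t S A M Sg))
      * e2 zt
    - Sg * (ph * S * dC_SSg C t S Sg - S * dDelta_dSg V gam t S A M Sg) * e3 zt
    - / 2 * (ph * dC_SgSg C t S Sg - dV_SgSg V t S A M Sg) * e4 zt.
Proof.
  intros _ _ _ _ _ psi1 psi2 psi3 psi4 _ _ _ HCSg _ _ _ _
    t S A M Sg ht hS hM hSg zt ph.
  pose proof (HCSg t S Sg ht hS hSg) as hc.
  assert (orth : dot4 (cvec C t S Sg) zt = 0)
    by (apply zeta_tilde_gen_orthogonal; auto).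
  assert (phE : ph * dC_Sg C t S Sg = dV_Sg V t S A M Sg)
    by (unfold ph, phi_star; field; exact hc).
  unfold g_tilde; fold zt.
  transitivity (dot4 (vvec V beta gam t S A M Sg) zt
                - ph * dot4 (cvec C t S Sg) zt).
  { rewrite orth; ring. }
  unfold dot4, cvec, vvec; simpl; rewrite <- phE; ring.
Qed.
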